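(* The Linear aTAM is not intrinsically universal: there is no finite 1D tile set $U$ (and temperature $\tau'$) with computable $\mathcal{R},S$ such that every Linear aTAM system $\mathcal{T}$ is simulated, at some scale $m$ under $\mathcal{R}(\mathcal{T})$, by the Linear aTAM system $(U,S(\mathcal{T}),\tau')$.
   Context: 1D aTAM: a tile type has a west glue and an east glue, each a pair (finite string label, nonnegative integer strength); a tile set is finite. Assemblies are partial functions $\alpha:\mathbb{Z}\dashrightarrow T$ with nonempty interval domain; adjacent tiles interact if the east glue of the left equals the west glue of the right with positive strength; $\alpha$ is $\tau$-stable if every cut between consecutive tiles has strength $\ge\tau$. A system $\mathcal{T}=(T,\sigma,\tau)$ has finite $\tau$-stable seed $\sigma$; growth is by single $\tau$-stable tile additions (finite or infinite sequences, result = limit). The Linear aTAM additionally requires that a tile can be added at empty location $p$ only if there is a path in $\mathbb{Z}$ from $p$ to a point outside the minimal bounding interval of the current assembly avoiding its domain. $\mathcal{A}[\mathcal{T}]$ are producible assemblies, $\mathcal{A}_\Box[\mathcal{T}]$ the producible ones admitting no further tile. Simulation: an $m$-block over $S$ is a partial function $\{0,\dots,m-1\}\dashrightarrow S$; $\alpha^m_x$ is $i\mapsto\alpha(mx+i)$. A partial $R$ from $m$-blocks to $T$ is valid if $\alpha\sqsubseteq\beta$, $\alpha\in\mathrm{dom}R$ imply $R(\beta)=R(\alpha)$; $R^*(\alpha')$ is $x\mapsto R(\alpha'^m_x)$. $\alpha'$ maps cleanly if each nonempty block at $x$ has $x$ or $x\pm1$ in $\mathrm{dom}\,R^*(\alpha')$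 (or at most one nonempty block). $\mathcal{S}$ simulates $\mathcal{T}$ under $R$ if: (i) $R^*$ maps $\mathcal{A}[\mathcal{S}]$ onto $\mathcal{A}[\mathcal{T}]$ and $\mathcal{A}_\Box[\mathcal{S}]$ onto $\mathcal{A}_\Box[\mathcal{T}]$, all producible assemblies mapping cleanly; (ii) producible $\alpha'\to^\mathcal{S}\beta'$ implies $R^*(\alpha')\to^\mathcal{T}R^*(\beta')$; (iii) for every $\alpha\in\mathcal{A}[\mathcal{T}]$ there is $\Pi\subset\mathcal{A}[\mathcal{S}]$ with $R^*=\alpha$ on $\Pi$ such that for every producible $\beta$ with $\alpha\to^\mathcal{T}\beta$: each $\alpha'\in\Pi$ produces some $\beta'$ with $R^*(\beta')=\beta$, and whenever producible $\alpha''\to^\mathcal{S}\beta'$ with $R^*(\alpha'')=\alpha$, $R^*(\beta')=\beta$, some $\alpha'\in\Pi$ produces $\alpha''$. *)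

From HB Require Import structures.
From mathcomp Require Import all_boot all_order all_algebra.
Set Implicit Arguments. Unset Strict Implicit. Unset Printing Implicit Defensive.
Import Order.TTheory GRing.Theory Num.Theory.

(* a glue: (finite string label over the alphabet nat, nonnegative strength) *)
Notation glue := (seq nat * nat)%type.
Notation tile := (glue * glue)%type.
Definition west (t : tile) : glue := t.1.
Definition east (t : tile) : glue := t.2.
Notation tileset := (seq tile).
Notation assembly := (int -> option tile).
(* a finite seed with (nonempty, interval) domain, given by its leftmost
   position and the list of its tiles from left to right *)
Notation seedT := (int * seq tile)%type.
Notation system := (tileset * seedT * nat)%type.

Definition sys_tiles (s : system) : tileset := s.1.1.
Definition sys_seed (s : system) : seedT := s.1.2.
Definition sys_temp (s : system) : nat := s.2.

Definition tile0 : tile := (([::], 0%N), ([::], 0%N)).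

Definition seed_asm (sd : seedT) : assembly := fun x =>
  if ((sd.1 <= x) && (x < sd.1 + (size sd.2)%:Z))%R
  then Some (nth tile0 sd.2 `|(x - sd.1)%R|%N) else None.

Definition cut (t t' : tile) : nat := if east t == west t' then (west t').2 else 0%N.

Definition stable (tau : nat) (a : assembly) : Prop :=
  forall (x : int) (t t' : tile), a x = Some t -> a (x + 1)%R = Some t' ->
    (tau <= cut t t')%N.

Definition is_asm (T : tileset) (a : assembly) : Prop :=
  (exists x, a x <> None) /\
  (forall x y z : int, (x <= y)%R -> (y <= z)%R -> a x <> None -> a z <> None ->
      a y <> None) /\
  (forall x t, a x = Some t -> t \in T).

Definition outside_bbox (a : assembly) (q : int) : Prop :=
  (forall x, a x <> None -> (q < x)%R) \/ (forall x, a x <> None -> (x < q)%R).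

Definition adjZ (u v : int) : bool := (v == u + 1)%R || (u == v + 1)%R.

(* Linear aTAM restriction: a path in Z from p to a point outside the
   bounding interval of a, avoiding the domain of a *)
Definition linear_ok (a : assembly) (p : int) : Prop :=
  exists s : seq int, path adjZ p s /\
    (forall z, z \in p :: s -> a z = None) /\ outside_bbox a (last p s).

Definition add1 (T : tileset) (tau : nat) (a b : assembly) : Prop :=
  exists (p : int) (t : tile), t \in T /\ a p = None /\ linear_ok a p /\
    (forall x, b x = if x == p then Some t else a x) /\
    is_asm T b /\ stable tau b.

(* a ->^T b : b results from a by a finite or infinite sequence of single
   tile additions (finite sequences = eventually stuttering), b = limit *)
Definition produces (T : tileset) (tau : nat) (a b : assembly) : Prop :=
  exists f : nat -> assembly, f 0%N =1 a /\
    (forall i, f i.+1 =1 f i \/ add1 T tau (f i) (f i.+1)) /\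
    (forall x, exists i, forall j, (i <= j)%N -> f j x = b x).

Definition producible (s : system) (b : assembly) : Prop :=
  produces (sys_tiles s) (sys_temp s) (seed_asm (sys_seed s)) b.

Definition terminal (s : system) (b : assembly) : Prop :=
  producible s b /\ ~ (exists c, add1 (sys_tiles s) (sys_temp s) b c).

Definition valid_system (s : system) : Prop :=
  (0 < sys_temp s)%N /\ (0 < size (sys_seed s).2)%N /\
  all (fun t => t \in sys_tiles s) (sys_seed s).2 /\
  stable (sys_temp s) (seed_asm (sys_seed s)).

Notation block := (seq (option tile)).
(* a (finite) partial map from blocks to tiles: first matching entry *)
Notation table := (seq (block * tile)).
(* representation data: scale m and partial map R *)
Notation rep := (nat * table)%type.

Definition rep_lookup (tb : table) (b : block) : option tile :=
  if [seq e <- tb | e.1 == b] is e :: _ then Some e.2 else None.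

Definition blockAt (m : nat) (a : assembly) (x : int) : block :=
  mkseq (fun i => a (m%:Z * x + i%:Z)%R) m.

Definition Rstar (R : rep) (a : assembly) : assembly :=
  fun x => rep_lookup R.2 (blockAt R.1 a x).

Definition block_over (U : tileset) (b : block) : bool :=
  all (fun o => if o is Some t then t \in U else true) b.

Definition sub_block (b b' : block) : Prop :=
  forall i t, nth None b i = Some t -> nth None b' i = Some t.

Definition valid_rep (U : tileset) (R : rep) : Prop :=
  forall b b' : block, size b = R.1 -> size b' = R.1 ->
    block_over U b -> block_over U b' -> sub_block b b' ->
    rep_lookup R.2 b <> None -> rep_lookup R.2 b' = rep_lookup R.2 b.

Definition nonempty_block (b : block) : bool := has (fun o => o != None) b.

Definition maps_cleanly (R : rep) (a : assembly) : Prop :=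
  (forall x, nonempty_block (blockAt R.1 a x) ->
     Rstar R a x <> None \/ Rstar R a (x + 1)%R <> None \/
     Rstar R a (x - 1)%R <> None) \/
  (forall x y, nonempty_block (blockAt R.1 a x) ->
     nonempty_block (blockAt R.1 a y) -> x = y).

Definition simulates (Ssys Tsys : system) (R : rep) : Prop :=
  let PS := producible Ssys in
  let PT := producible Tsys in
  let prS := produces (sys_tiles Ssys) (sys_temp Ssys) in
  let prT := produces (sys_tiles Tsys) (sys_temp Tsys) in
  (0 < R.1)%N /\ valid_rep (sys_tiles Ssys) R /\
  (forall a', PS a' -> PT (Rstar R a')) /\
  (forall a, PT a -> exists a', PS a' /\ Rstar R a' =1 a) /\
  (forall a', terminal Ssys a' -> terminal Tsys (Rstar R a')) /\
  (forall a, terminal Tsys a -> exists a', terminal Ssys a' /\ Rstar R a' =1 a) /\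
  (forall a', PS a' -> maps_cleanly R a') /\
  (forall a' b', PS a' -> prS a' b' -> prT (Rstar R a') (Rstar R b')) /\
  (forall a, PT a -> exists Pi : assembly -> Prop,
     (forall a', Pi a' -> PS a' /\ Rstar R a' =1 a) /\
     (forall b, PT b -> prT a b ->
        (forall a', Pi a' -> exists b', prS a' b' /\ Rstar R b' =1 b) /\
        (forall a'' b', PS a'' -> prS a'' b' -> Rstar R a'' =1 a ->
           Rstar R b' =1 b -> exists a', Pi a' /\ prS a' a''))).

(* Computability: register (Minsky) machines on nat, countable types    *)
(* encoded via pickle                                                   *)

Inductive instr := INC of nat | DEC of nat & nat.

Definition upd (r : nat -> nat) (i v : nat) : nat -> nat :=
  fun j => if j == i then v else r j.

Definition rm_step (p : seq instr) (st : nat * (nat -> nat)) : nat * (nat -> nat) :=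
  let: (pc, r) := st in
  if (pc < size p)%N then
    match nth (INC 0) p pc with
    | INC i => (pc.+1, upd r i (r i).+1)
    | DEC i j => if r i == 0%N then (j, r) else (pc.+1, upd r i (r i).-1)
    end
  else st.

Definition rm_computes (p : seq instr) (n out : nat) : Prop :=
  exists k, let st := iter k (rm_step p) (0%N, upd (fun _ => 0%N) 0 n) in
    (size p <= st.1)%N /\ st.2 0%N = out.

Definition computable (A B : countType) (f : A -> B) : Prop :=
  exists p : seq instr, forall a, rm_computes p (pickle a) (pickle (f a)).

(* The counterexample is the temperature-1 system T_n whose tiles 0, ..., n glue in a row,
   so that it assembles exactly the segments [0, k] with k <= n.  Suppose U simulates T_n,
   n = |U| + 2, at scale m, from a seed ending at r.  Validity of R forces the seed to
   represent only the origin, so a simulation of the full segment [0, n] must place tiles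
   outside the seed in blocks 1 and n; the first gives r < 2m, and then the second gives
   |U| + 1 consecutive tiles right of the seed.  Two of them coincide, and since attaching a
   tile at the right end of an assembly is always a Linear aTAM step, repeating the stretch
   between them forever produces an assembly that is infinite to the right.  Its
   representation is producible in T_n, hence bounded by n, while its blocks from 2 on are
   all nonempty, so it cannot map cleanly. *)

From mathcomp Require Import all_boot all_order all_algebra zify.
Set Implicit Arguments. Unset Strict Implicit. Unset Printing Implicit Defensive.
Import Order.TTheory GRing.Theory Num.Theory.
Local Open Scope ring_scope.

Definition sub_asm (a b : assembly) : Prop :=
  forall x t, a x = Some t -> b x = Some t.

Definition wf_asm (T : tileset) (tau : nat) (a : assembly) : Prop :=
  is_asm T a /\ stable tau a.

Definition growth_chain (T : tileset) (tau : nat) (f : nat -> assembly) : Prop :=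
  forall i, f i.+1 =1 f i \/ add1 T tau (f i) (f i.+1).

Definition seed_end (sd : seedT) : int := sd.1 + (size sd.2)%:Z - 1.

Section Growth.
Variables (T : tileset) (tau : nat).

Lemma add1_sub_asm a b : add1 T tau a b -> sub_asm a b.
Proof.
case=> p [t [_ [ap [_ [eb _]]]]] x u ax; rewrite eb.
by case: eqP => // xp; rewrite xp ap in ax.
Qed.

Lemma growth_chain_sub f i j :
  growth_chain T tau f -> (i <= j)%N -> sub_asm (f i) (f j).
Proof.
move=> chain /subnKC <-; elim: (j - i)%N => [|k IHk]; first by rewrite addn0.
rewrite addnS => x t /IHk fx.
by case: (chain (i + k)%N) => [-> // | /add1_sub_asm]; apply.
Qed.

Lemma growth_chain_invariant (P : assembly -> Prop) f :
  (forall c c', c =1 c' -> P c -> P c') ->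
  (forall i, add1 T tau (f i) (f i.+1) -> P (f i) -> P (f i.+1)) ->
  growth_chain T tau f -> P (f 0%N) -> forall i, P (f i).
Proof.
move=> Pext Pstep chain P0; elim=> // i IHi.
by case: (chain i) => [e | /Pstep]; [apply: Pext IHi => x; rewrite e | apply].
Qed.

Lemma produces_sub_asm a b : produces T tau a b -> sub_asm a b.
Proof.
case=> f [f0 [chain lim]] x t ax; case: (lim x) => i fi.
by rewrite -(fi i) //; apply: (growth_chain_sub chain (leq0n i)); rewrite f0.
Qed.

Lemma produces_refl a : produces T tau a a.
Proof. by exists (fun=> a); split=> //; split=> [i|x]; [left | exists 0%N]. Qed.

Lemma wf_asm_ext a b : a =1 b -> wf_asm T tau a -> wf_asm T tau b.
Proof.
move=> e [[[x ax] [aI aT]] aS]; split; first split.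
- by exists x; rewrite -e.
- by split=> [x' y z|x' t]; rewrite -?e; [apply: aI | apply: aT].
- by move=> x' t t'; rewrite -!e; apply: aS.
Qed.

Lemma produces_wf_asm a b : produces T tau a b -> wf_asm T tau a -> wf_asm T tau b.
Proof.
move=> pab; case: (pab) => f [f0 [chain lim]] wa.
have wf_f : forall i, wf_asm T tau (f i).
  apply: (growth_chain_invariant _ _ chain); first exact: wf_asm_ext.
    by move=> i [p [t [_ [_ [_ [_ wc]]]]]].
  by apply: wf_asm_ext wa => x; rewrite f0.
have lim3 x y z : exists i, [/\ f i x = b x, f i y = b y & f i z = b z].
  case: (lim x) (lim y) (lim z) => i fi [j fj] [k fk].
  by exists (maxn i (maxn j k)); rewrite fi ?fj ?fk //; lia.
case: wa => [[[x0 ax0] _] _]; split; first split.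
- exists x0; case E: (a x0) ax0 => [t|] // _.
  by rewrite (produces_sub_asm pab E).
- split=> [x y z xy yz bx bz | x t bx].
    case: (lim3 x y z) => i [fx <- fz]; case: (wf_f i) => [[_ [fI _]] _].
    by apply: fI xy yz _ _; rewrite ?fx ?fz.
  case: (lim3 x x x) => i [fx _ _]; case: (wf_f i) => [[_ [_ fT]] _].
  by apply: (fT x); rewrite fx.
- move=> x t t' bx bx1; case: (lim3 x (x + 1) x) => i [fx fx1 _].
  by case: (wf_f i) => _ fS; apply: (fS x); rewrite ?fx ?fx1.
Qed.

Lemma linear_ok_right (a : assembly) p :
  (forall x, a x <> None -> x < p) -> linear_ok a p.
Proof.
move=> ltp; exists [::]; split=> //; split; last by right.
move=> z; rewrite inE => /eqP ->.
case E: (a p) => [t|] //; suff: p < p by rewrite ltxx.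
by apply: ltp; rewrite E.
Qed.

End Growth.

Lemma seed_asmP (sd : seedT) x :
  seed_asm sd x <> None <-> sd.1 <= x <= seed_end sd.
Proof.
by rewrite /seed_asm /seed_end; case: ifP => dom; split=> // ?; lia.
Qed.

Lemma valid_system_seed_wf (s : system) :
  valid_system s -> wf_asm (sys_tiles s) (sys_temp s) (seed_asm (sys_seed s)).
Proof.
case: s => [[T [l sd]] tau] [_ [/= sd_gt0 [sdT sdS]]]; split=> //; split.
  by exists l; apply/seed_asmP; rewrite /seed_end /=; lia.
split=> [x y z xy yz /seed_asmP ? /seed_asmP ? | x t].
  by apply/seed_asmP; lia.
rewrite /seed_asm /=; case: ifP => // /andP [? ?] [<-].
by apply: (allP sdT); apply: mem_nth; rewrite -ltz_nat gez0_abs ?subr_ge0 // ltrBlDl.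
Qed.

Definition extend_right (c : assembly) (r : int) (tl : nat -> tile) (k : nat) : assembly :=
  fun x => if x <= r then c x
           else if x <= r + k%:Z then Some (tl `|(x - r - 1)%R|%N) else None.

Definition extend_right_inf (c : assembly) (r : int) (tl : nat -> tile) : assembly :=
  fun x => if x <= r then c x else Some (tl `|(x - r - 1)%R|%N).

Section RightExtension.
Variables (T : tileset) (tau : nat) (c : assembly) (r : int) (tl : nat -> tile).
Hypotheses (c_wf : wf_asm T tau c) (c_r : c r <> None)
  (c_le_r : forall x, c x <> None -> x <= r)
  (c_tl0 : forall u, c r = Some u -> (tau <= cut u (tl 0))%N).

Definition tail_ok (k : nat) : Prop :=
  (forall i, (i < k)%N -> tl i \in T) /\
  (forall i, (i.+1 < k)%N -> (tau <= cut (tl i) (tl i.+1))%N).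

Lemma tail_ok_le i k : (i <= k)%N -> tail_ok k -> tail_ok i.
Proof. by move=> ik [okT okS]; split=> j ji; [apply: okT | apply: okS]; lia. Qed.

Lemma extend_right0 : extend_right c r tl 0 =1 c.
Proof.
move=> x; rewrite /extend_right addr0; case: ifP => // xr; rewrite xr.
case E: (c x) => [t|] //; suff: x <= r by rewrite xr.
by apply: c_le_r; rewrite E.
Qed.

Lemma extend_right_dom k x :
  extend_right c r tl k x <> None <-> c x <> None \/ r < x <= r + k%:Z.
Proof.
rewrite /extend_right; case: ifP => xr.
  by split=> [|[//|]]; [left | lia].
case: ifP => xk; split=> //; first by right; lia.
by case=> [/c_le_r|]; rewrite ?xr //; lia.
Qed.

Lemma extend_right_wf k : tail_ok k -> wf_asm T tau (extend_right c r tl k).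
Proof.
case: c_wf => [[[x0 cx0] [cI cT]] cS] [okT okS]; split; first split.
- by exists x0; apply/extend_right_dom; left.
- split=> [x y z xy yz /extend_right_dom hx /extend_right_dom hz | x t].
    apply/extend_right_dom; case: (lerP y r) => yr; last by right; case: hz => [/c_le_r|]; lia.
    left; apply: (cI x y r) => //; case: hx => // ?; lia.
  rewrite /extend_right; case: ifP => xr; first exact: cT.
  by case: ifP => // xk [<-]; apply: okT; lia.
- move=> x t t'; rewrite /extend_right.
  case: (ltrgtP x r) => [xr|rx|->].
  + by rewrite ifT; [exact: cS | lia].
  + case: ifP => // xk [<-]; rewrite ifF; last lia.
    case: ifP => // x1k [<-].
    have -> : `|(x + 1 - r - 1)%R|%N = (`|(x - r - 1)%R|%N).+1 by lia.
    by apply: okS; lia.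
  + rewrite ifF; last lia.
    move=> cr; case: ifP => // _ [<-]; have -> : `|(r + 1 - r - 1)%R|%N = 0%N by lia.
    exact: c_tl0.
Qed.

Lemma add1_extend_right k :
  tail_ok k.+1 -> add1 T tau (extend_right c r tl k) (extend_right c r tl k.+1).
Proof.
move=> ok; have wf' := extend_right_wf ok.
exists (r + k.+1%:Z), (tl k); split; first by case: ok => okT _; apply: okT.
split; first by rewrite /extend_right !ifF //; lia.
split.
  apply: linear_ok_right => x /extend_right_dom [/c_le_r|]; lia.
split=> // x; rewrite /extend_right.
case: eqP => [->|xk].
  rewrite ifF; last lia.
  by rewrite ifT; [do 2 f_equal | ]; lia.
by case: ifP => // _; case: ifP => xk1; case: ifP => xk2 //; exfalso; lia.
Qed.

Lemma produces_extend_right k : tail_ok k -> produces T tau c (extend_right c r tl k).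
Proof.
move=> ok; exists (fun i => extend_right c r tl (minn i k)); split.
  by rewrite min0n; apply: extend_right0.
split=> [i|x]; last by exists k => j kj; rewrite (minn_idPr kj).
case: (ltnP i k) => ik; last by left; rewrite (minn_idPr (leqW ik)).
by right; rewrite (minn_idPl ik); apply: add1_extend_right; apply: tail_ok_le ok.
Qed.

Lemma produces_extend_right_inf :
  (forall k, tail_ok k) -> produces T tau c (extend_right_inf c r tl).
Proof.
move=> ok; exists (extend_right c r tl); split; first exact: extend_right0.
split=> [i|x]; first by right; apply: add1_extend_right.
exists `|(x - r)%R|%N => j xj; rewrite /extend_right /extend_right_inf.
by case: ifP => // xr; rewrite ifT //; lia.
Qed.

End RightExtension.

Definition line_tile (n k : nat) : tile :=
  (([:: k], nat_of_bool (k != 0)%N), ([:: k.+1], nat_of_bool (k != n))).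

Definition line_tiles (n : nat) : tileset := [seq line_tile n k | k <- iota 0 n.+1].

Definition line_seed (n : nat) : seedT := (0, [:: line_tile n 0]).

Definition line_sys (n : nat) : system := (line_tiles n, line_seed n, 1%N).

Definition line_full (n : nat) : assembly :=
  extend_right (seed_asm (line_seed n)) 0 (fun i => line_tile n i.+1) n.

Section Line.
Variable n : nat.

Lemma line_tilesP t : reflect (exists2 k, (k <= n)%N & t = line_tile n k) (t \in line_tiles n).
Proof.
apply: (iffP mapP) => [[k] | [k kn ->]]; last by exists k; rewrite // mem_iota.
by rewrite mem_iota => /andP [_ kn] ->; exists k.
Qed.

Lemma line_tile_in k : (k <= n)%N -> line_tile n k \in line_tiles n.
Proof. by move=> kn; apply/line_tilesP; exists k. Qed.

Lemma cut_line_tile_gt0 a b : (0 < cut (line_tile n a) (line_tile n b))%N -> b = a.+1.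
Proof. by rewrite /cut /east /west /=; case: eqP => // [[]]. Qed.

Lemma cut_line_tile_succ a : (a < n)%N -> (1 <= cut (line_tile n a) (line_tile n a.+1))%N.
Proof.
move=> an; rewrite /cut /east /west /=.
have -> : (a != n) = true by apply/eqP; lia.
by rewrite eqxx.
Qed.

Lemma line_seed_asm x : seed_asm (line_seed n) x = if x == 0 then Some (line_tile n 0) else None.
Proof. by rewrite /seed_asm /=; case: eqP => [->|x0] //; case: ifP => // x01; exfalso; lia. Qed.

Lemma valid_line_sys : valid_system (line_sys n).
Proof.
split=> //; split=> //; split; first by rewrite /= line_tile_in.
by move=> x t t'; rewrite /sys_seed /= !line_seed_asm; case: eqP => // ->; case: eqP.
Qed.

Definition line_shaped (a : assembly) : Prop :=
  forall x t, a x = Some t -> exists2 k, (k <= n)%N & x = k%:Z /\ t = line_tile n k.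

Lemma add1_line_shaped c c' :
  add1 (line_tiles n) 1 c c' -> c 0 <> None -> line_shaped c -> line_shaped c'.
Proof.
case=> p [u [/line_tilesP [k kn ->] [cp [_ [c'E [[_ [c'I _]] c'S]]]]]] c0 shc.
have c'_old x : x != p -> c' x = c x by rewrite c'E => /negbTE ->.
have c'p : c' p = Some (line_tile n k) by rewrite c'E eqxx.
have p0 : p != 0 by apply: contraPneq c0 => <-.
have c'0 : c' 0 <> None by rewrite c'_old // eq_sym.
move=> x t; rewrite c'E; case: eqP => [-> [<-] | _]; last exact: shc.
case: (ltrP 0 p) => [p_gt0 | p_le0].
- have : c' (p - 1) <> None by apply: (c'I 0 (p - 1) p); rewrite ?c'p //; lia.
  have pp : p - 1 != p by lia.
  rewrite c'_old //; case E: (c (p - 1)) => [v|] // _.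
  case: (shc _ _ E) => j _ [ej ev]; rewrite ev in E.
  have := c'S (p - 1) _ _ _; rewrite subrK c'_old // => /(_ _ _ E c'p)/cut_line_tile_gt0 kj.
  by exists k => //; split=> //; lia.
- have : c' (p + 1) <> None by apply: (c'I p (p + 1) 0); rewrite ?c'p //; lia.
  have pp : p + 1 != p by lia.
  rewrite c'_old //; case E: (c (p + 1)) => [v|] // _.
  case: (shc _ _ E) => j _ [ej ev]; rewrite ev in E.
  have := c'S p _ _ c'p; rewrite c'_old // => /(_ _ E)/cut_line_tile_gt0; lia.
Qed.

Lemma line_producible_shaped a : producible (line_sys n) a -> line_shaped a.
Proof.
case=> f [f0 [chain lim]].
have seed_sub i : sub_asm (seed_asm (line_seed n)) (f i).
  by move=> x t st; apply: (growth_chain_sub chain (leq0n i)); rewrite f0.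
have shaped : forall i, line_shaped (f i).
  apply: (growth_chain_invariant _ _ chain).
  - by move=> c c' e shc x t; rewrite -e; apply: shc.
  - move=> i /add1_line_shaped; apply.
    by rewrite (seed_sub i 0 (line_tile n 0)) // line_seed_asm.
  - move=> x t; rewrite f0 line_seed_asm; case: eqP => // -> [<-].
    by exists 0%N.
by move=> x t ax; case: (lim x) => i fi; apply: (shaped i); rewrite fi.
Qed.

Lemma line_full_producible : (0 < n)%N -> producible (line_sys n) (line_full n).
Proof.
move=> n_gt0; apply: produces_extend_right.
- exact: (valid_system_seed_wf valid_line_sys).
- by rewrite line_seed_asm.
- by move=> x; rewrite line_seed_asm; case: eqP => // ->.
- by move=> u; rewrite line_seed_asm => -[<-]; apply: cut_line_tile_succ.
- by split=> i ik; [apply: line_tile_in | apply: cut_line_tile_succ]; lia.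
Qed.

Lemma line_full_dom x : (0 <= x <= n%:Z) -> line_full n x <> None.
Proof.
move=> x0n; apply/extend_right_dom.
- by move=> y; rewrite line_seed_asm; case: eqP => // ->.
by case: (x =P 0) => [->|x0]; [left; rewrite line_seed_asm | right; lia].
Qed.

End Line.

Lemma blockAt_sub m a b x : sub_asm a b -> sub_block (blockAt m a x) (blockAt m b x).
Proof.
move=> ab i t; case: (ltnP i m) => im; last by rewrite nth_default // size_mkseq.
by rewrite !nth_mkseq //; apply: ab.
Qed.

Lemma blockAt_over U m a x : is_asm U a -> block_over U (blockAt m a x).
Proof.
case=> _ [_ aU]; apply/allP => _ /mapP [i _ ->].
by case E: (a _) => [t|] //; apply: aU E.
Qed.

Lemma eq_blockAt m a b x y :
  (forall i, (i < m)%N -> a (m%:Z * x + i%:Z) = b (m%:Z * y + i%:Z)) ->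
  blockAt m a x = blockAt m b y.
Proof. by move=> ab; apply/eq_in_map => i; rewrite mem_iota => /ab. Qed.

Lemma nonempty_blockAt m a x i :
  (i < m)%N -> a (m%:Z * x + i%:Z) <> None -> nonempty_block (blockAt m a x).
Proof.
move=> im ai; apply/(has_nthP None); exists i; first by rewrite size_mkseq.
by rewrite nth_mkseq //; apply/eqP.
Qed.

Lemma Rstar_sub U R a b x t :
  valid_rep U R -> is_asm U a -> is_asm U b -> sub_asm a b ->
  Rstar R a x = Some t -> Rstar R b x = Some t.
Proof.
move=> vR aU bU ab ax; rewrite /Rstar -ax.
apply: vR; rewrite ?size_mkseq //; try exact: blockAt_over.
  exact: blockAt_sub.
by rewrite [rep_lookup _ _]ax.
Qed.

Lemma repeat_in_prefix (T : eqType) (U : seq T) (w : nat -> T) :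
  (forall i, (i <= size U)%N -> w i \in U) ->
  exists j k, (j < k <= size U)%N /\ w j = w k.
Proof.
move=> wU; pose L := mkseq w (size U).+1.
have LU : {subset L <= U}.
  by move=> t /mapP [i]; rewrite mem_iota => /andP [_ iU] ->; apply: wU.
have : ~~ uniq L.
  by apply/negP => uL; have := uniq_leq_size uL LU; rewrite size_mkseq ltnn.
case/(uniqPn (w 0%N)) => j [k [jk]]; rewrite size_mkseq => kU.
rewrite !nth_mkseq //; last exact: ltn_trans kU.
by move=> wjk; exists j, k; split=> //; lia.
Qed.

Definition loop_next (j k p : nat) : nat := if p.+1 == k then j else p.+1.

Definition loop_index (j k t : nat) : nat := iter t (loop_next j k) 0.

Lemma loop_index_lt j k t : (j < k)%N -> (loop_index j k t < k)%N.
Proof.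
move=> jk; elim: t => [|t IHt] /=; first exact: leq_ltn_trans jk.
by rewrite /loop_next; case: eqP => //; lia.
Qed.

Lemma loop_index_succ (T : Type) (w : nat -> T) j k t :
  w j = w k -> w (loop_index j k t.+1) = w (loop_index j k t).+1.
Proof. by move=> wjk; rewrite /= /loop_next; case: eqP => // ->. Qed.

Lemma pump_right U tau (c a : assembly) (r : int) :
  wf_asm U tau c -> c r <> None -> (forall x, c x <> None -> x <= r) ->
  wf_asm U tau a -> sub_asm c a ->
  (forall i, (i <= size U)%N -> a (r + i.+1%:Z) <> None) ->
  exists2 a', produces U tau c a' & forall x, r < x -> a' x <> None.
Proof.
move=> c_wf c_r c_le_r [[_ [_ aU]] aS] ca a_fill.
pose w i := odflt tile0 (a (r + i.+1%:Z)).
have aw i : (i <= size U)%N -> a (r + i.+1%:Z) = Some (w i).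
  by move/a_fill; rewrite /w; case: (a _).
have [j [k [/andP [jk kU] wjk]]] := repeat_in_prefix (fun i iU => aU _ _ (aw i iU)).
pose tl t := w (loop_index j k t).
exists (extend_right_inf c r tl); last by move=> x rx; rewrite /extend_right_inf ifF //; lia.
apply: produces_extend_right_inf => //.
  move=> u cu; apply: (aS r u (w 0%N)); first exact: ca.
  exact: aw.
have idx_le t : (loop_index j k t < size U)%N.
  exact: leq_trans (loop_index_lt t jk) kU.
split=> i _; first by apply: aU (aw _ _); apply: ltnW.
rewrite /tl loop_index_succ //.
apply: (aS (r + (loop_index j k i).+1%:Z)); first exact/aw/ltnW.
have -> : r + (loop_index j k i).+1%:Z + 1 = r + (loop_index j k i).+2%:Z by lia.
exact: aw.
Qed.

Section LineSimulation.
Variables (U : tileset) (tau : nat) (sd : seedT) (R : rep) (n : nat).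
Hypotheses (S_valid : valid_system (U, sd, tau))
  (sim : simulates (U, sd, tau) (line_sys n) R).

Local Notation S := (U, sd, tau).
Local Notation m := R.1.
Local Notation seed := (seed_asm sd).
Local Notation r := (seed_end sd).

Lemma seed_wf : wf_asm U tau seed.
Proof. exact: valid_system_seed_wf S_valid. Qed.

Lemma producible_wf_sub a : producible S a -> wf_asm U tau a /\ sub_asm seed a.
Proof. by move=> pa; split; [apply: produces_wf_asm pa seed_wf | apply: produces_sub_asm pa]. Qed.

Lemma Rstar_seed_support x t : Rstar R seed x = Some t -> x = 0.
Proof.
have [_ [vR [_ [represent _]]]] := sim.
case: (represent _ (produces_refl _ _ (seed_asm (line_seed n)))) => a [pa Ra].
have [[aU _] seed_a] := producible_wf_sub pa.
move/(Rstar_sub vR seed_wf.1 aU seed_a); rewrite Ra line_seed_asm.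
by case: eqP.
Qed.

Lemma Rstar_seed_origin : Rstar R seed 0 <> None.
Proof.
have [_ [_ [to_T _]]] := sim.
have /produces_sub_asm/(_ 0 (line_tile n 0)) := to_T _ (produces_refl U tau seed).
by rewrite line_seed_asm eqxx => ->.
Qed.

Lemma seed_end_defined : seed r <> None.
Proof.
case: S_valid => _ [sd_gt0 _]; rewrite /sys_seed /= in sd_gt0.
by apply/seed_asmP; rewrite /seed_end; lia.
Qed.

Lemma seed_le_end x : seed x <> None -> x <= r.
Proof. by case/seed_asmP/andP. Qed.

Lemma seed_before_start x : x < sd.1 -> seed x = None.
Proof.
move=> x_lt; case E: (seed x) => [t|] //.
have /seed_asmP : seed x <> None by rewrite E.
by move=> ?; exfalso; lia.
Qed.

Lemma seed_start_lt_scale : sd.1 < m%:Z.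
Proof.
rewrite ltNge; apply/negP => m_le.
have : blockAt m seed (-1) = blockAt m seed 0.
  by apply: eq_blockAt => i im; rewrite !seed_before_start //; lia.
move: Rstar_seed_origin; rewrite /Rstar => /[swap] <-.
case E: (rep_lookup _ _) => [t|] // _.
by have := @Rstar_seed_support (-1) t E.
Qed.

Lemma Rstar_leaves_seed a x :
  producible S a -> 0 < x -> Rstar R a x <> None ->
  exists2 q, m%:Z * x <= q < m%:Z * x + m%:Z & r < q /\ a q <> None.
Proof.
move=> pa x_gt0 Rax; have [_ seed_a] := producible_wf_sub pa.
pose out i := (a (m%:Z * x + i%:Z) != None) && (r < m%:Z * x + i%:Z).
case: (boolP (has out (iota 0 m))) => [/hasP [i] | /hasPn in_seed].
  rewrite mem_iota => /andP [_ im] /andP [/eqP ai ri].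
  by exists (m%:Z * x + i%:Z); [lia | split].
have : blockAt m a x = blockAt m seed x.
  apply: eq_blockAt => i im; set y := _ + _.
  case E: (seed y) => [t|]; first exact: seed_a.
  case Ea: (a y) => [u|] //; exfalso.
  have : ~~ out i by apply: in_seed; rewrite mem_iota; lia.
  rewrite /out Ea /= -leNgt => yr.
  have : seed y <> None by apply/seed_asmP; have := seed_start_lt_scale; nia.
  by rewrite E.
move: Rax; rewrite /Rstar => /[swap] ->.
case E: (rep_lookup _ _) => [t|] // _.
by have := @Rstar_seed_support x t E; lia.
Qed.

Hypothesis n_large : ((size U).+2 <= n)%N.

Lemma line_simulation :
  exists2 a, producible S a & forall x, 0 <= x <= n%:Z -> Rstar R a x <> None.
Proof.
have [_ [_ [_ [represent _]]]] := sim.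
have n_gt0 : (0 < n)%N by lia.
have [a [pa Ra]] := represent _ (line_full_producible n_gt0).
by exists a => // x x0n; rewrite Ra; apply: line_full_dom.
Qed.

Lemma seed_end_lt : r < m%:Z + m%:Z.
Proof.
have [a pa Ra] := line_simulation.
have Ra1 : Rstar R a 1 <> None by apply: Ra; lia.
by have [q] := Rstar_leaves_seed pa ltr01 Ra1; lia.
Qed.

Lemma line_simulation_fills :
  exists2 a, producible S a & forall i, (i <= size U)%N -> a (r + i.+1%:Z) <> None.
Proof.
have [a pa Ra] := line_simulation; exists a => // i iU.
have [[[_ [aI _]] _] seed_a] := producible_wf_sub pa.
have Ran : Rstar R a n%:Z <> None by apply: Ra; lia.
have [|q /andP [qn _] [rq aq]] := Rstar_leaves_seed pa _ Ran; first by lia.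
have ar : a r <> None.
  by case E: (seed r) seed_end_defined => [t|] // _; rewrite (seed_a _ _ E).
have m_gt0 : (0 < m)%N by case: sim.
by apply: (aI r _ q) => //; [lia | have := seed_end_lt; nia].
Qed.

Lemma seed_extends_forever :
  exists2 a, producible S a & forall x, r < x -> a x <> None.
Proof.
have [a pa a_fill] := line_simulation_fills.
have [a_wf seed_a] := producible_wf_sub pa.
exact: pump_right seed_wf seed_end_defined seed_le_end a_wf seed_a a_fill.
Qed.

Lemma line_not_simulated : False.
Proof.
have [m_gt0 [_ [to_T [_ [_ [_ [clean _]]]]]]] := sim.
have [a pa a_inf] := seed_extends_forever.
have Ra_le_n y : Rstar R a y <> None -> y <= n%:Z.
  case E: (Rstar R a y) => [t|] // _.
  by have [k kn [-> _]] := line_producible_shaped (to_T _ pa) E; lia.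
have a_block y : 2 <= y -> nonempty_block (blockAt m a y).
  move=> y2; apply: (@nonempty_blockAt _ _ _ 0%N) => //; apply: a_inf.
  by have := seed_end_lt; nia.
have [y2 y12] : 2 <= n.+2%:Z /\ 2 <= n.+2%:Z + 1 by lia.
case: (clean a pa) => [near | single].
- by case: (near _ (a_block _ y2)) => [|[|]] /Ra_le_n; lia.
- by have := single _ _ (a_block _ y2) (a_block _ y12); lia.
Qed.

End LineSimulation.

Theorem mainTheorem8 :
  ~ (exists (U : tileset) (tau' : nat) (R : system -> rep) (S : system -> seedT),
       computable R /\ computable S /\
       forall T : system, valid_system T ->
         valid_system (U, S T, tau') /\ simulates (U, S T, tau') T (R T)).
Proof.
case=> U [tau' [R [S [_ [_ simulator]]]]].
have [S_valid sim] := simulator _ (valid_line_sys (size U).+2).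
exact: line_not_simulated S_valid sim (leqnn _).
Qed.
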